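(* Let $K=1$. For every reflection matrix $\mathbf\Phi$ for which (SDR1.2) has an optimal solution, problems (P1.1) and (P2.1) have the same optimal value. Consequently, when these subproblems attain their optima for all $\mathbf\Phi$, the joint problems (P1) and (P2) have the same optimal value, i.e. sensing-interference cancellation at the (single) user provides no gain.
   Context: Let $M,N\ge1$ be integers and $K=1$. Fixed data: $\mathbf G\in\mathbb C^{N\times M}$, $\mathbf h_{\mathrm d,1}\in\mathbb C^{M}$, $\mathbf h_{\mathrm r,1}\in\mathbb C^{N}$, threshold $\Gamma_1>0$, noise power $\sigma_1^2>0$, power budget $P_0>0$. A reflection matrix is $\mathbf\Phi=\mathrm{diag}(\mathbf v)$ with $\mathbf v\in\mathbb C^N$, $|v_n|=1$ for all $n$; put $\mathbf h_1=\mathbf h_{\mathrm d,1}+\mathbf G^H\mathbf\Phi^H\mathbf h_{\mathrm r,1}$ and $\mathbf H_1=\mathbf h_1\mathbf h_1^H$. For $\mathbf w_1\in\mathbb C^M$ and Hermitian $\mathbf R_0\succeq\mathbf 0$: Type-I SINR $\gamma_1^{\mathrm I}=|\mathbf h_1^H\mathbf w_1|^2/(\mathbf h_1^H\mathbf R_0\mathbf h_1+\sigma_1^2)$, Type-II SINR $\gamma_1^{\mathrm{II}}=|\mathbf h_1^H\mathbf w_1|^2/\sigma_1^2$. For Hermitian $\mathbf X\succeq\mathbf 0$ define $f(\mathbf X)=\mathrm{tr}\big((\mathbf G\mathbf X\mathbf G^H)^{-1}\big)$ if $\mathbf G\mathbf X\mathbf G^H$ is invertible and $+\infty$ otherwise.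 Problem (P1.1) (resp. (P2.1)), for fixed $\mathbf\Phi$: minimize $f(\mathbf w_1\mathbf w_1^H+\mathbf R_0)$ over $\mathbf w_1,\mathbf R_0\succeq\mathbf 0$ subject to $\gamma_1^{\mathrm I}\ge\Gamma_1$ (resp. $\gamma_1^{\mathrm{II}}\ge\Gamma_1$) and $\|\mathbf w_1\|^2+\mathrm{tr}(\mathbf R_0)\le P_0$. Problems (P1) and (P2) are the same minimizations carried out jointly over $\mathbf w_1,\mathbf R_0$ and all reflection matrices $\mathbf\Phi$. Problem (SDR1.2): minimize $f(\mathbf W_1+\mathbf R_0)$ over Hermitian $\mathbf W_1\succeq\mathbf 0,\mathbf R_0\succeq\mathbf 0$ subject to $(1+\tfrac1{\Gamma_1})\mathrm{tr}(\mathbf H_1\mathbf W_1)-\mathrm{tr}(\mathbf H_1(\mathbf W_1+\mathbf R_0))\ge\sigma_1^2$ and $\mathrm{tr}(\mathbf W_1)+\mathrm{tr}(\mathbf R_0)\le P_0$. *)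

From HB Require Import structures.
From mathcomp Require Import all_boot all_order all_algebra.
From mathcomp Require Import all_classical all_reals ereal.
From mathcomp Require Import complex.

Set Implicit Arguments.
Unset Strict Implicit.
Unset Printing Implicit Defensive.

Import Order.TTheory GRing.Theory Num.Theory.
Local Open Scope ring_scope.
Local Open Scope classical_set_scope.

Section ISAC.
Variable R : realType.
Local Notation C := R[i].

Definition hadj m n (A : 'M[C]_(m, n)) : 'M[C]_(n, m) :=
  (map_mx (@conjc R) A)^T.

Definition cRe (z : C) : R := complex.Re z.

Definition cabs2 (z : C) : R := Normc.normc z ^+ 2.

Definition hermitian n (A : 'M[C]_n) : Prop := hadj A = A.
Definition psd n (A : 'M[C]_n) : Prop :=
  hermitian A /\ forall x : 'cV[C]_n, 0 <= cRe ((hadj x *m A *m x) 0 0).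

Definition retr n (A : 'M[C]_n) : R := cRe (\tr A).
Definition quad n (A : 'M[C]_n) (x : 'cV[C]_n) : R :=
  cRe ((hadj x *m A *m x) 0 0).
Definition sqnorm n (w : 'cV[C]_n) : R := cRe ((hadj w *m w) 0 0).

Variables (M N : nat).
Variables (G : 'M[C]_(N, M)) (hd : 'cV[C]_M) (hr : 'cV[C]_N).
Variables (Gamma sigma2 P0 : R).

(* reflection vector: unit-modulus entries; Phi = diag(v) *)
Definition unit_modulus (v : 'cV[C]_N) : Prop := forall n, Normc.normc (v n 0) = 1.
Definition Phi (v : 'cV[C]_N) : 'M[C]_N := diag_mx v^T.

Definition h1 (v : 'cV[C]_N) : 'cV[C]_M := hd + hadj G *m hadj (Phi v) *m hr.
Definition H1 (v : 'cV[C]_N) : 'M[C]_M := h1 v *m hadj (h1 v).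

Definition fobj (X : 'M[C]_M) : \bar R :=
  let Y := G *m X *m hadj G in
  if Y \in unitmx then (retr (invmx Y))%:E else +oo%E.

Definition sinrI (v : 'cV[C]_N) (w : 'cV[C]_M) (R0 : 'M[C]_M) : R :=
  cabs2 ((hadj (h1 v) *m w) 0 0) / (quad R0 (h1 v) + sigma2).
Definition sinrII (v : 'cV[C]_N) (w : 'cV[C]_M) : R :=
  cabs2 ((hadj (h1 v) *m w) 0 0) / sigma2.

Definition feas11 (v : 'cV[C]_N) (w : 'cV[C]_M) (R0 : 'M[C]_M) : Prop :=
  psd R0 /\ Gamma <= sinrI v w R0 /\ sqnorm w + retr R0 <= P0.
Definition feas21 (v : 'cV[C]_N) (w : 'cV[C]_M) (R0 : 'M[C]_M) : Prop :=
  psd R0 /\ Gamma <= sinrII v w /\ sqnorm w + retr R0 <= P0.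

(* optimal values (infima; +oo if infeasible) *)
Definition val11 (v : 'cV[C]_N) : \bar R :=
  ereal_inf [set x | exists (w : 'cV[C]_M) (R0 : 'M[C]_M),
                       feas11 v w R0 /\ x = fobj (w *m hadj w + R0)].
Definition val21 (v : 'cV[C]_N) : \bar R :=
  ereal_inf [set x | exists (w : 'cV[C]_M) (R0 : 'M[C]_M),
                       feas21 v w R0 /\ x = fobj (w *m hadj w + R0)].

Definition valP1 : \bar R :=
  ereal_inf [set x | exists (v : 'cV[C]_N) (w : 'cV[C]_M) (R0 : 'M[C]_M),
                       unit_modulus v /\ feas11 v w R0 /\ x = fobj (w *m hadj w + R0)].
Definition valP2 : \bar R :=
  ereal_inf [set x | exists (v : 'cV[C]_N) (w : 'cV[C]_M) (R0 : 'M[C]_M),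
                       unit_modulus v /\ feas21 v w R0 /\ x = fobj (w *m hadj w + R0)].

Definition feasSDR (v : 'cV[C]_N) (W1 R0 : 'M[C]_M) : Prop :=
  psd W1 /\ psd R0 /\
  (1 + Gamma^-1) * retr (H1 v *m W1) - retr (H1 v *m (W1 + R0)) >= sigma2 /\
  retr W1 + retr R0 <= P0.
Definition SDR_has_opt (v : 'cV[C]_N) : Prop :=
  exists W1 R0, feasSDR v W1 R0 /\
    forall W1' R0', feasSDR v W1' R0' -> (fobj (W1 + R0) <= fobj (W1' + R0'))%E.

End ISAC.

From Pilot Require Import Defs.
From HB Require Import structures.
From mathcomp Require Import all_boot all_order all_algebra.
From mathcomp Require Import all_classical all_reals ereal.
From mathcomp Require Import complex.
From mathcomp Require Import lra ring.
Import Order.TTheory GRing.Theory Num.Theory.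
Set Implicit Arguments.
Unset Strict Implicit.
Unset Printing Implicit Defensive.
Local Open Scope ring_scope.

(* (P1.1) and (P2.1) minimize the same objective f(X) of X = w w^H + R0, so it
   suffices that their feasible sets have the same image under (w, R0) |-> X.
   - A (P1.1)-feasible point is (P2.1)-feasible: h^H R0 h >= 0 only lowers the
     Type-I SINR below the Type-II one.
   - Conversely, let (w, R0) be (P2.1)-feasible and X = w w^H + R0, which is
     Hermitian positive semidefinite, with s = h^H X h >= |h^H w|^2 > 0.  The
     rank-one deflation w' = X h / sqrt s, R0' = X - w' w'^H keeps X and its
     trace, R0' is again positive semidefinite (a Cauchy-Schwarz argument:
     evaluate X at x - (h^H X x / s) h), h^H R0' h = 0 and |h^H w'|^2 = s, so
     (w', R0') is (P1.1)-feasible with Type-I SINR s / sigma^2 >= Gamma.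
   Hence the optimal values agree for every reflection vector, and also after minimizing over it. *)

Section ConjugateTranspose.
Variable R : realType.
Local Notation C := R[i].

Lemma hadjE m n (A : 'M[C]_(m, n)) i j : hadj A i j = conjc (A j i).
Proof. by rewrite /hadj !mxE. Qed.

Lemma hadjK m n (A : 'M[C]_(m, n)) : hadj (hadj A) = A.
Proof. by apply/matrixP => i j; rewrite !hadjE conjcK. Qed.

Lemma hadjM m n p (A : 'M[C]_(m, n)) (B : 'M[C]_(n, p)) :
  hadj (A *m B) = hadj B *m hadj A.
Proof.
apply/matrixP => i j; rewrite hadjE !mxE rmorph_sum; apply: eq_bigr => k _.
by rewrite rmorphM !hadjE mulrC.
Qed.

Lemma hadjD m n (A B : 'M[C]_(m, n)) : hadj (A + B) = hadj A + hadj B.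
Proof. by apply/matrixP => i j; rewrite !hadjE !mxE rmorphD. Qed.

Lemma hadjN m n (A : 'M[C]_(m, n)) : hadj (- A) = - hadj A.
Proof. by apply/matrixP => i j; rewrite !hadjE !mxE rmorphN. Qed.

Lemma hadjZ m n (c : C) (A : 'M[C]_(m, n)) : hadj (c *: A) = conjc c *: hadj A.
Proof. by apply/matrixP => i j; rewrite !hadjE !mxE rmorphM. Qed.

Lemma mx11_mul (P Q : 'M[C]_1) : (P *m Q) 0 0 = P 0 0 * Q 0 0.
Proof. by rewrite mxE big_ord1. Qed.

Lemma real_of_conj (u : C) : conjc u = u -> u = (complex.Re u)%:C%C.
Proof. by case: u => a b /= [] hb; congr Complex; lra. Qed.

Lemma ReD (a b : C) : complex.Re (a + b) = complex.Re a + complex.Re b.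
Proof. by case: a; case: b. Qed.

Lemma Re_mul_conj (z : C) : complex.Re (z * conjc z) = cabs2 z.
Proof.
case: z => a b; rewrite /cabs2 /= sqr_sqrtr ?addr_ge0 ?sqr_ge0 //.
by rewrite mulrN opprK !expr2.
Qed.

Lemma retrD n (A B : 'M[C]_n) : retr (A + B) = retr A + retr B.
Proof. by rewrite /retr /cRe mxtraceD ReD. Qed.

Lemma sqnorm_retr n (u : 'cV[C]_n) : sqnorm u = retr (u *m hadj u).
Proof. by rewrite /retr /sqnorm mxtrace_mulC /mxtrace big_ord1. Qed.

End ConjugateTranspose.

Section SesquilinearForm.
Variable R : realType.
Local Notation C := R[i].
Variable n : nat.
Implicit Types (X Y : 'M[C]_n) (u x y z : 'cV[C]_n).

Definition form X x y : C := (hadj x *m X *m y) 0 0.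

Lemma quadE X x : quad X x = cRe (form X x x).
Proof. by []. Qed.

Lemma form_conj X x y : Defs.hermitian X -> conjc (form X x y) = form X y x.
Proof. by move=> hX; rewrite /form -hadjE !hadjM hadjK -mulmxA hX mulmxA. Qed.

Lemma formDl X x y z : form X (x + y) z = form X x z + form X y z.
Proof. by rewrite /form hadjD !mulmxDl mxE. Qed.

Lemma formZl X t x z : form X (t *: x) z = conjc t * form X x z.
Proof. by rewrite /form hadjZ -!scalemxAl mxE. Qed.

Lemma formDr X x y z : form X z (x + y) = form X z x + form X z y.
Proof. by rewrite /form mulmxDr mxE. Qed.

Lemma formZr X t x z : form X z (t *: x) = t * form X z x.
Proof. by rewrite /form -scalemxAr mxE. Qed.

Lemma formD X Y x y : form (X + Y) x y = form X x y + form Y x y.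
Proof. by rewrite /form mulmxDr mulmxDl mxE. Qed.

Lemma formN X x y : form (- X) x y = - form X x y.
Proof. by rewrite /form mulmxN mulNmx mxE. Qed.

Lemma formB X Y x y : form (X - Y) x y = form X x y - form Y x y.
Proof. by rewrite formD formN. Qed.

Lemma form_line X x h t : form X (x + t *: h) (x + t *: h) =
  form X x x + t * form X x h + conjc t * form X h x + conjc t * t * form X h h.
Proof. by rewrite !formDl !formDr !formZl !formZr; ring. Qed.

Lemma form_rank1 u x y : form (u *m hadj u) x y = (hadj x *m u) 0 0 * (hadj u *m y) 0 0.
Proof. by rewrite /form !mulmxA -mx11_mul -!mulmxA. Qed.

Lemma quad_rank1 u x : quad (u *m hadj u) x = cabs2 ((hadj x *m u) 0 0).
Proof.
rewrite quadE form_rank1 /cRe -Re_mul_conj.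
by rewrite -[(hadj u *m x) 0 0]conjcK -hadjE hadjM hadjK.
Qed.

Lemma quadD X Y x : quad (X + Y) x = quad X x + quad Y x.
Proof. by rewrite !quadE formD /cRe ReD. Qed.

End SesquilinearForm.

Section RankOneDeflation.
Variable R : realType.
Local Notation C := R[i].
Variable n : nat.
Variables (X : 'M[C]_n) (h : 'cV[C]_n).
Hypotheses (hermX : Defs.hermitian X) (psdX : forall x, 0 <= quad X x).
Hypothesis s_gt0 : 0 < quad X h.

(* For a positive semidefinite X with s = h^H X h > 0, the vector
   w = X h / sqrt s spans the part of X "seen" by h: X - w w^H stays
   positive semidefinite and is blind to h. *)
Let s := quad X h.
Let c : C := ((Num.sqrt s)^-1)%:C%C.
Definition deflation_vector : 'cV[C]_n := c *: (X *m h).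
Local Notation w := deflation_vector.

Let form_hh : form X h h = (s%:C)%C.
Proof. by apply: real_of_conj; exact: form_conj. Qed.

Let c2 : c * c = (s^-1)%:C%C.
Proof.
by rewrite -rmorphM /= -invfM -expr2 sqr_sqrtr // ltW.
Qed.

Let w_left y : (hadj y *m w) 0 0 = c * form X y h.
Proof. by rewrite /w -scalemxAr mxE mulmxA. Qed.

Let w_right y : (hadj w *m y) 0 0 = c * form X h y.
Proof. by rewrite /w hadjZ hadjM hermX -scalemxAl mxE conjc_real. Qed.

Lemma deflation_form x :
  form (w *m hadj w) x x = (s^-1)%:C%C * (form X x h * form X h x).
Proof. by rewrite form_rank1 w_left w_right -c2; ring. Qed.

Lemma deflation_psd : psd (X - w *m hadj w).
Proof.
split; first by rewrite /Defs.hermitian hadjD hadjN hadjM hadjK hermX.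
move=> x; pose t : C := - (form X h x / (s%:C)%C).
have sC0 : (s%:C)%C != 0 :> C.
  by apply/eqP => -[] s0; move: s_gt0; rewrite -/s s0 ltxx.
have conj_t : conjc t = - (conjc (form X h x) / (s%:C)%C).
  rewrite /t rmorphN rmorphM fmorphV; congr (- (_ * _^-1)); exact: conjc_real.
change (0 <= quad (X - w *m hadj w) x); rewrite quadE.
suff <- : form X (x + t *: h) (x + t *: h) = form (X - w *m hadj w) x x.
  exact: psdX.
rewrite formB deflation_form form_line form_hh -(form_conj h x hermX) conj_t.
by rewrite /t fmorphV /=; field.
Qed.

Lemma deflation_blind : quad (X - w *m hadj w) h = 0.
Proof.
rewrite quadE formB deflation_form form_hh /cRe /=.
by field; exact: lt0r_neq0.
Qed.

Lemma deflation_gain : cabs2 ((hadj h *m w) 0 0) = s.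
Proof.
rewrite -quad_rank1 quadE deflation_form form_hh /cRe /=.
by field; exact: lt0r_neq0.
Qed.

End RankOneDeflation.

Section FeasibilityTransfer.
Variable R : realType.
Local Notation C := R[i].
Variables (M N : nat) (G : 'M[C]_(N, M)) (hd : 'cV[C]_M) (hr : 'cV[C]_N).
Variables (Gamma sigma2 P0 : R).
Hypotheses (hGamma : 0 < Gamma) (hsigma2 : 0 < sigma2).
Implicit Types (v : 'cV[C]_N) (w : 'cV[C]_M).

Local Notation feas11 := (feas11 G hd hr Gamma sigma2 P0).
Local Notation feas21 := (feas21 G hd hr Gamma sigma2 P0).

(* Interference at the user can only decrease the SINR. *)
Lemma feas11_feas21 v w (R0 : 'M[C]_M) : feas11 v w R0 -> feas21 v w R0.
Proof.
move=> [[hR psdR] [sinr pow]]; do !split => //; apply: le_trans sinr _.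
have q0 := psdR (h1 G hd hr v).
rewrite /sinrI /sinrII ler_wpM2l ?sqr_ge0 // lef_pV2 ?posrE ?lerDr //.
by rewrite ltr_wpDl.
Qed.

Lemma feas21_feas11 v w (R0 : 'M[C]_M) : feas21 v w R0 ->
  exists w' R0', feas11 v w' R0' /\ w' *m hadj w' + R0' = w *m hadj w + R0.
Proof.
move=> [[hR psdR] [sinr pow]].
set h := h1 G hd hr v; set X := w *m hadj w + R0.
have hermX : Defs.hermitian X by rewrite /Defs.hermitian hadjD hadjM hadjK hR.
have psdX x : 0 <= quad X x.
  by rewrite quadD quad_rank1; apply: addr_ge0; [exact: sqr_ge0 | exact: psdR].
have gain : Gamma * sigma2 <= cabs2 ((hadj h *m w) 0 0).
  by move: sinr; rewrite /sinrII ler_pdivlMr.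
have le_s : cabs2 ((hadj h *m w) 0 0) <= quad X h.
  by rewrite quadD quad_rank1 lerDl; exact: psdR.
have s_gt0 : 0 < quad X h.
  by apply: lt_le_trans le_s; apply: lt_le_trans gain; exact: mulr_gt0.
set w' := deflation_vector X h.
exists w', (X - w' *m hadj w'); split; last by rewrite addrC subrK.
split; first exact: deflation_psd.
split.
  rewrite /sinrI -/h deflation_blind // add0r deflation_gain //.
  by rewrite ler_pdivlMr //; apply: le_trans gain le_s.
by rewrite sqnorm_retr -retrD subrKC /X retrD -sqnorm_retr.
Qed.

Lemma val11_val21 v : val11 G hd hr Gamma sigma2 P0 v = val21 G hd hr Gamma sigma2 P0 v.
Proof.
congr ereal_inf; apply/seteqP; split => x /=.
  by move=> [w [R0 [hf ->]]]; exists w, R0; split => //; exact: feas11_feas21.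
move=> [w [R0 [hf ->]]]; have [w' [R0' [hf' same]]] := feas21_feas11 hf.
by exists w', R0'; rewrite same.
Qed.

Lemma valP1_valP2 : valP1 G hd hr Gamma sigma2 P0 = valP2 G hd hr Gamma sigma2 P0.
Proof.
congr ereal_inf; apply/seteqP; split => x /=.
  move=> [v [w [R0 [hu [hf ->]]]]]; exists v, w, R0.
  by split=> //; split=> //; exact: feas11_feas21.
move=> [v [w [R0 [hu [hf ->]]]]]; have [w' [R0' [hf' same]]] := feas21_feas11 hf.
by exists v, w', R0'; rewrite same.
Qed.

End FeasibilityTransfer.

Unset Implicit Arguments.
Theorem proposition5 (R : realType) (M N : nat) (hM : (0 < M)%N) (hN : (0 < N)%N)
    (G : 'M[R[i]]_(N, M)) (hd : 'cV[R[i]]_M) (hr : 'cV[R[i]]_N)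
    (Gamma sigma2 P0 : R)
    (hGamma : 0 < Gamma) (hsigma2 : 0 < sigma2) (hP0 : 0 < P0) :
  (forall v : 'cV[R[i]]_N, unit_modulus v ->
     SDR_has_opt G hd hr Gamma sigma2 P0 v ->
     val11 G hd hr Gamma sigma2 P0 v = val21 G hd hr Gamma sigma2 P0 v) /\
  ((forall v : 'cV[R[i]]_N, unit_modulus v -> SDR_has_opt G hd hr Gamma sigma2 P0 v) ->
     valP1 G hd hr Gamma sigma2 P0 = valP2 G hd hr Gamma sigma2 P0).
Proof.
split.
- by move=> v _ _; exact: val11_val21.
- by move=> _; exact: valP1_valP2.
Qed.
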